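(* Let $H\in\mathbb{R}^{n_z\times n_z}$ be symmetric positive definite, $F\in\mathbb{R}^{n_x\times n_z}$, $G\in\mathbb{R}^{n_c\times n_z}$, $S\in\mathbb{R}^{n_c\times n_x}$, $w\in\mathbb{R}^{n_c}$, and assume $\{z: Gz\le Sx+w\}\neq\emptyset$ for every $x\in\mathbb{R}^{n_x}$. Assume LICQ: for every $x$, the rows $\{G_j: j\in\mathbb{A}(x)\}$ are linearly independent. Let $\kappa$ be a global Lipschitz constant, $x,\hat{x}\in\mathbb{R}^{n_x}$, and $$\mathbb{I}(x)=\mathbb{A}(\hat{x})\cup\big\{j\in\mathbb{A}^c(\hat{x}): \mathcal{B}(z^*(\hat{x}),\kappa\|x-\hat{x}\|)\not\subseteq\mathcal{Z}_j(x)\big\}.$$ If $\|x-\hat{x}\|\le\sigma_i/\sqrt{1+\kappa^2}$ for some $i\in\{1,\dots,n_c\}$, then $|\mathbb{I}(x)|\le n_z+i$.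
   Context: mp-QP$(x)$: minimize $V(z)=\frac12z^THz+x^TFz$ over $\mathcal{Z}(x)=\{z: Gz\le Sx+w\}$. $G_j,S_j$ are $j$-th rows, $w_j$ the $j$-th entry, $\mathcal{Z}_j(x)=\{z: G_jz\le S_jx+w_j\}$. $z^*(x,\mathbb{I})$ is the unique minimizer of $V$ subject only to constraints indexed by $\mathbb{I}\subseteq\{1,\dots,n_c\}$; $z^*(x)=z^*(x,\{1,\dots,n_c\})$. $\mathbb{A}(x)=\{j: G_jz^*(x)=S_jx+w_j\}$, $\mathbb{A}^c(x)$ its complement in $\{1,\dots,n_c\}$. A global Lipschitz constant is $\kappa\in\mathbb{R}$ with $\|z^*(x_1,\mathbb{I})-z^*(x_2,\mathbb{I})\|\le\kappa\|x_1-x_2\|$ for all $x_1,x_2,\mathbb{I}$. With $\bar H=[-S,\;G]$, rows $\bar H_j$, $\mathcal{V}=\{v\in\mathbb{R}^{n_x+n_z}:\bar Hv\le w\}$, $\mathcal{V}_j=\{v:\bar H_jv\le w_j\}$, define $\sigma_i=\sup\{r\ge0: \inf_{v\in\mathcal{V}}|\{j: \mathcal{B}(v,r)\subseteq\mathcal{V}_j\}|\ge n_c-i\}\in[0,+\infty]$. $\mathcal{B}(q,r)$ is the closed Euclidean ball. *)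

From HB Require Import structures.
From mathcomp Require Import all_boot all_order all_algebra.
From mathcomp Require Import boolp classical_sets reals constructive_ereal ereal.
Set Implicit Arguments. Unset Strict Implicit. Unset Printing Implicit Defensive.
Import Order.TTheory GRing.Theory Num.Theory.
Local Open Scope classical_set_scope.
Local Open Scope ring_scope.

Section MPQP.
Variables (R : realType) (nx nz nc : nat).
Variables (H : 'M[R]_nz) (F : 'M[R]_(nx, nz)) (G : 'M[R]_(nc, nz))
          (S : 'M[R]_(nc, nx)) (w : 'cV[R]_nc).

Definition enorm (k : nat) (v : 'cV[R]_k) : R := Num.sqrt (\sum_i (v i 0) ^+ 2).

Definition eball (k : nat) (q : 'cV[R]_k) (r : R) : set 'cV[R]_k :=
  [set p | enorm (p - q) <= r].

Definition cost (x : 'cV[R]_nx) (z : 'cV[R]_nz) : R :=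
  2^-1 * (z^T *m H *m z) 0 0 + (x^T *m F *m z) 0 0.

Definition Zj (x : 'cV[R]_nx) (j : 'I_nc) : set 'cV[R]_nz :=
  [set z | (G *m z) j 0 <= (S *m x) j 0 + w j 0].

Definition is_minimizer (x : 'cV[R]_nx) (I : {set 'I_nc}) (z : 'cV[R]_nz) : Prop :=
  (forall j, j \in I -> Zj x j z) /\
  (forall z', (forall j, j \in I -> Zj x j z') -> cost x z <= cost x z').

Definition zstarI (x : 'cV[R]_nx) (I : {set 'I_nc}) : 'cV[R]_nz :=
  xget 0 [set z | is_minimizer x I z].

Definition zstar (x : 'cV[R]_nx) : 'cV[R]_nz := zstarI x [set: 'I_nc]%SET.

Definition active (x : 'cV[R]_nx) : {set 'I_nc} :=
  [set j | (G *m zstar x) j 0 == (S *m x) j 0 + w j 0].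

Definition Iset (kappa : R) (xhat x : 'cV[R]_nx) : {set 'I_nc} :=
  active xhat :|: [set j in ~: active xhat |
     `[< ~ (eball (zstar xhat) (kappa * enorm (x - xhat)) `<=` Zj x j) >]].

Definition Hbar : 'M[R]_(nc, nx + nz) := row_mx (- S) G.
Definition Vj (j : 'I_nc) : set 'cV[R]_(nx + nz) :=
  [set v | (Hbar *m v) j 0 <= w j 0].
Definition Vset : set 'cV[R]_(nx + nz) := [set v | forall j, Vj j v].

(* sigma_i = sup { r >= 0 : inf_{v in V} |{ j : B(v, r) ⊆ V_j }| >= nc - i }
   (the infimum over v of a natural-number valued function is >= nc - i
    iff every value is >= nc - i) *)
Definition sigma (i : nat) : \bar R :=
  ereal_sup [set r%:E | r in
    [set r : R | 0 <= r /\
       forall v, Vset v ->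
         (nc - i <= #|[set j : 'I_nc | `[< eball v r `<=` Vj j >]]|)%N]].

End MPQP.

From HB Require Import structures.
From mathcomp Require Import all_boot all_order all_algebra.
From mathcomp Require Import boolp classical_sets reals constructive_ereal ereal.
From mathcomp Require Import topology normedtype derive.
From mathcomp Require Import ring lra zify.
Import Order.TTheory GRing.Theory Num.Theory.
Import numFieldTopology.Exports numFieldNormedType.Exports.
Local Open Scope classical_set_scope.
Local Open Scope ring_scope.

(* By LICQ the rows of G indexed by A(xhat) are independent, so |A(xhat)| <= nz.
   Every other index j of I(x) comes with a z in B(z*(xhat), kappa |x - xhat|)
   violating constraint j at x, so p = (x, z) lies outside V_j at distance at
   most |x - xhat| sqrt(1 + kappa^2) <= sigma_i from vhat = (xhat, z*(xhat)),
   which is in V; sliding p towards vhat makes this distance strict.  As the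
   supremum defining sigma_i need not be attained, this strictness is what
   yields an admissible radius r < sigma_i whose ball around vhat contains all
   these points: that ball lies in at least nc - i of the V_j, but in none of
   the V_j for the indices at hand, so there are at most i of them.
   The only analytic input is that z*(xhat) is feasible, i.e. that the QP has
   a minimizer, which holds because the positive definite cost is coercive. *)

Lemma card_le_of_free_rows (K : fieldType) (m n : nat) (G : 'M[K]_(m, n))
    (A : {set 'I_m}) :
  (forall c : 'I_m -> K, \sum_(j in A) c j *: row j G = 0 ->
     forall j, j \in A -> c j = 0) ->
  (#|A| <= n)%N.
Proof.
move=> free_rows; pose GA := \matrix_(i < #|A|) row (enum_val i) G.
suff /eqP <- : row_free GA by exact: rank_leq_col.
apply: inj_row_free => v vGA0.
pose c j := \sum_(i < #|A| | enum_val i == j) v 0 i.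
have cE i : c (enum_val i) = v 0 i.
  by rewrite /c (big_pred1 i) // => i'; rewrite /= (inj_eq enum_val_inj).
have sum_c0 : \sum_(j in A) c j *: row j G = 0.
  rewrite big_enum_val -[RHS]vGA0 mulmx_sum_row; apply: eq_bigr => i _.
  by rewrite cE rowK.
by apply/rowP => i; rewrite mxE -cE (free_rows c sum_c0) // enum_valP.
Qed.

Section EuclideanNorm.
Context {R : realType}.

Lemma enorm_ge0 {k} (v : 'cV[R]_k) : 0 <= enorm v.
Proof. exact: sqrtr_ge0. Qed.

Lemma enormZ {k} (a : R) (v : 'cV[R]_k) : enorm (a *: v) = `|a| * enorm v.
Proof.
rewrite /enorm -sqrtr_sqr -sqrtrM ?sqr_ge0 // mulr_sumr; congr Num.sqrt.
by apply: eq_bigr => i _; rewrite mxE exprMn.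
Qed.

Lemma enorm_eq0 {k} (v : 'cV[R]_k) : (enorm v == 0) = (v == 0).
Proof.
have sqr_ge0' i : true -> 0 <= v i 0 ^+ 2 by move=> _; exact: sqr_ge0.
rewrite /enorm sqrtr_eq0 le_eqVlt ltNge sumr_ge0 // orbF psumr_eq0 //.
apply/allP/eqP => [v0|-> i _]; last by rewrite implyTb mxE expr0n.
apply/colP => i; apply/eqP; rewrite mxE -sqrf_eq0.
exact: implyP (v0 i (mem_index_enum i)) isT.
Qed.

Lemma enorm_gt0 {k} (v : 'cV[R]_k) : (0 < enorm v) = (v != 0).
Proof. by rewrite lt_def enorm_eq0 enorm_ge0 andbT. Qed.

Lemma enorm_col_mx {m p} (a : 'cV[R]_m) (b : 'cV[R]_p) :
  enorm (col_mx a b) = Num.sqrt (enorm a ^+ 2 + enorm b ^+ 2).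
Proof.
have sum_sqr_ge0 k (v : 'cV[R]_k) : 0 <= \sum_i v i 0 ^+ 2.
  by apply: sumr_ge0 => i _; exact: sqr_ge0.
rewrite /enorm !sqr_sqrtr // big_split_ord /=.
by congr (Num.sqrt (_ + _)); apply: eq_bigr => i _; rewrite ?col_mxEu ?col_mxEd.
Qed.

Lemma enorm_col_mx_sub_le {m p} {a a' : 'cV[R]_m} {b b' : 'cV[R]_p} {k : R} :
  enorm (b - b') <= k * enorm (a - a') ->
  enorm (col_mx a b - col_mx a' b') <= enorm (a - a') * Num.sqrt (1 + k ^+ 2).
Proof.
move=> b_le; set d := enorm (a - a').
have d_ge0 : 0 <= d := enorm_ge0 _.
have kd_ge0 : 0 <= k * d := le_trans (enorm_ge0 _) b_le.
rewrite opp_col_mx add_col_mx enorm_col_mx -[d in X in _ <= X]ger0_norm //.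
rewrite -sqrtr_sqr -sqrtrM ?sqr_ge0 // ler_wsqrtr // mulrDr mulr1 lerD2l.
by rewrite -exprMn mulrC ler_pXn2r // nnegrE enorm_ge0.
Qed.

Lemma exists_closer_point_outside_halfspace {m k} {A : 'M[R]_(m, k)} {j}
    {b : R} {v p : 'cV[R]_k} :
  (A *m v) j 0 <= b -> b < (A *m p) j 0 ->
  exists2 q, enorm (q - v) < enorm (p - v) & b < (A *m q) j 0.
Proof.
have A_segment (s : R) : (A *m (v + s *: (p - v))) j 0 =
    (A *m v) j 0 + s * ((A *m p) j 0 - (A *m v) j 0).
  by rewrite mulmxDr -scalemxAr mulmxBr !mxE.
set a := (A *m v) j 0; set c := (A *m p) j 0 => a_le c_gt.
have p_neq_v : p - v != 0.
  by apply: contraTneq c_gt => /subr0_eq pv; rewrite /c pv -leNgt.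
have ca_gt0 : 0 < c - a by lra.
(* the point of the segment [v, p] where A_j takes the value (b + c) / 2 *)
pose t := (b - a + (c - a)) / (2 * (c - a)).
have t_ge0 : 0 <= t by rewrite divr_ge0 ?mulr_ge0; lra.
have t_lt1 : t < 1 by rewrite ltr_pdivrMr ?mulr_gt0 //; lra.
exists (v + t *: (p - v)).
  by rewrite addrAC subrr add0r enormZ ger0_norm // gtr_pMl // enorm_gt0.
rewrite A_segment -/a -/c.
have -> : t * (c - a) = (b - a + (c - a)) / 2.
  by rewrite /t; field; rewrite gt_eqF.
lra.
Qed.

End EuclideanNorm.

(* Heine-Borel (bounded_closed_compact) is available for row vectors only, so
   the existence of minimizers is proved on rows and transposed afterwards. *)
Section CoerciveMinimization.
Context {R : realType} {n : nat}.

Lemma mulmx_tr_continuous {m} (A : 'M[R]_(m, n)) i :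
  continuous (fun u : 'rV[R]_n => (A *m u^T) i 0).
Proof.
have -> : (fun u : 'rV[R]_n => (A *m u^T) i 0) = fun u => \sum_k A i k * u 0 k.
  by apply: funext => u; rewrite mxE; apply: eq_bigr => k _; rewrite mxE.
apply: (@continuous_big _ _ +%R 0 _ add_continuous) => k _ v.
apply: (@continuousM R _ (fun=> A i k) (fun u : 'rV[R]_n => u 0 k) v).
  exact: cst_continuous.
exact: coord_continuous.
Qed.

Lemma quad_form_continuous (H : 'M[R]_n) :
  continuous (fun u : 'rV[R]_n => (u *m H *m u^T) 0 0).
Proof.
have -> : (fun u : 'rV[R]_n => (u *m H *m u^T) 0 0) =
          fun u => \sum_k (H^T *m u^T) k 0 * u 0 k.
  apply: funext => u; rewrite mxE; apply: eq_bigr => k _.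
  by rewrite -trmx_mul !mxE.
apply: (@continuous_big _ _ +%R 0 _ add_continuous) => k _ v.
apply: (@continuousM R _ (fun u => (H^T *m u^T) k 0) (fun u => u 0 k) v).
  exact: mulmx_tr_continuous.
exact: coord_continuous.
Qed.

Lemma quad_formZ (H : 'M[R]_n) (a : R) (u : 'rV[R]_n) :
  ((a *: u) *m H *m (a *: u)^T) 0 0 = a ^+ 2 * (u *m H *m u^T) 0 0.
Proof. by rewrite linearZ -!scalemxAl -scalemxAr scalerA !mxE expr2. Qed.

Lemma quad_form_coercive (H : 'M[R]_n) :
  (forall u : 'rV[R]_n, u != 0 -> 0 < (u *m H *m u^T) 0 0) ->
  exists2 lam : R, 0 < lam &
    forall u : 'rV[R]_n, lam * `|u| ^+ 2 <= (u *m H *m u^T) 0 0.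
Proof.
move=> H_pd; pose sphere := [set u : 'rV[R]_n | `|u| = 1].
have normalize_in_sphere u : u != 0 -> sphere (`|u|^-1 *: u).
  move=> u0; rewrite /sphere /= normrZ ger0_norm ?invr_ge0 //.
  by rewrite mulVf // normr_eq0.
have bound_from_sphere lam (u : 'rV[R]_n) :
    (forall v, sphere v -> lam <= (v *m H *m v^T) 0 0) ->
    lam * `|u| ^+ 2 <= (u *m H *m u^T) 0 0.
  move=> lam_le; have [->|u0] := eqVneq u 0.
    by rewrite normr0 expr0n mulr0 !mul0mx mxE.
  have u_gt0 : 0 < `|u| by rewrite normr_gt0.
  have := lam_le _ (normalize_in_sphere u u0); rewrite quad_formZ.
  by rewrite exprVn ler_pdivlMl ?exprn_gt0 // mulrC.
have [[u0 u0S]|sphere0] := pselect (sphere !=set0); last first.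
  exists 1 => // u; apply: bound_from_sphere => v Sv.
  by exfalso; apply: sphere0; exists v.
have sphere_compact : compact sphere.
  apply: bounded_closed_compact.
    by exists 1; split; [rewrite num_real | move=> M M1 u /= ->; rewrite ltW].
  rewrite (_ : sphere = (@Num.norm _ _ : 'rV[R]_n -> R) @^-1` [set 1]) //.
  apply: (proj1 (continuous_closedP _) (@norm_continuous _ _)).
  exact: closed_eq.
have [c /set_mem cS c_min] := compact_EVT_min (ex_intro _ u0 u0S)
  sphere_compact (continuous_subspaceT (quad_form_continuous H)).
exists ((c *m H *m c^T) 0 0).
  apply: H_pd; apply/eqP => c0.
  by move: cS; rewrite c0 normr0 => /esym/eqP; rewrite oner_eq0.
by move=> u; apply: bound_from_sphere => v Sv; apply: c_min; exact: mem_set.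
Qed.

Lemma continuous_min_of_bounded_sublevel {A : set 'rV[R]_n}
    {f : 'rV[R]_n -> R} {u0 : 'rV[R]_n} {M : R} :
  closed A -> continuous f -> A u0 ->
  (forall u, f u <= f u0 -> `|u| <= M) ->
  exists2 c, A c & forall u, A u -> f c <= f u.
Proof.
move=> A_closed f_cont Au0 sublevel_bounded.
pose K := A `&` [set u | f u <= f u0].
have Ku0 : K u0 := conj Au0 (lexx _).
have K_compact : compact K.
  apply: bounded_closed_compact.
    exists M; split; first by rewrite num_real.
    by move=> N MN u [_ /sublevel_bounded uM]; apply: le_trans uM (ltW MN).
  apply: closedI => //.
  apply: (proj1 (continuous_closedP _) f_cont [set r | r <= f u0]).
  exact: closed_le.
have [c /set_mem [Ac _] c_min] := compact_EVT_min (ex_intro _ u0 Ku0)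
  K_compact (continuous_subspaceT f_cont).
exists c => // u Au; have [u_le|u_gt] := leP (f u) (f u0).
  by apply: c_min; exact: mem_set.
by apply: le_trans (ltW u_gt); apply: c_min; exact: mem_set.
Qed.

Lemma mx_entry_le_norm m p (A : 'M[R]_(m, p)) i j : `|A i j| <= `|A|.
Proof.
rewrite [leRHS]/Num.norm /= mx_normrE.
exact: (@le_bigmax _ _ _ 0 (fun ij : 'I_m * 'I_p => `|A ij.1 ij.2|) (i, j)).
Qed.

Lemma sqr_le_affine_bound (a b c t : R) :
  0 < a -> 0 <= b -> 0 <= c -> 0 <= t ->
  a * t ^+ 2 <= b * t + c -> t <= (b + c) / a + 1.
Proof.
move=> a_gt0 b_ge0 c_ge0 t_ge0 t_le; have [t_le1|t_gt1] := leP t 1.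
  by rewrite (le_trans t_le1) // lerDr divr_ge0 ?addr_ge0 // ltW.
suff : t <= (b + c) / a by lra.
by rewrite ler_pdivlMr // mulrC; nra.
Qed.

Lemma quad_linear_sublevel_bounded (H : 'M[R]_n) (l : 'rV[R]_n) (b : R) :
  (forall u : 'rV[R]_n, u != 0 -> 0 < (u *m H *m u^T) 0 0) ->
  exists M, forall u : 'rV[R]_n,
    2^-1 * (u *m H *m u^T) 0 0 + (l *m u^T) 0 0 <= b -> `|u| <= M.
Proof.
move=> H_pd; have [lam lam_gt0 lam_le] := quad_form_coercive H H_pd.
pose C := \sum_j `|l 0 j|.
have C_ge0 : 0 <= C by apply: sumr_ge0.
exists ((2 * C + 2 * `|b|) / lam + 1) => u u_le.
have : `|(l *m u^T) 0 0| <= C * `|u|.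
  rewrite mxE mulr_suml; apply: le_trans (ler_norm_sum _ _ _) _.
  apply: ler_sum => j _; rewrite normrM ler_wpM2l // mxE.
  exact: mx_entry_le_norm.
rewrite ler_norml => /andP[lin_ge _].
apply: sqr_le_affine_bound; rewrite ?mulr_ge0 ?normr_ge0 //.
have := lam_le u; have := ler_norm b; lra.
Qed.

End CoerciveMinimization.

Section QuadraticProgram.
Context {R : realType} {nx nz nc : nat}.
Variables (H : 'M[R]_nz) (F : 'M[R]_(nx, nz)) (G : 'M[R]_(nc, nz))
          (S : 'M[R]_(nc, nx)) (w : 'cV[R]_nc).
Hypothesis H_pd : forall z : 'cV[R]_nz, z != 0 -> 0 < (z^T *m H *m z) 0 0.

Lemma exists_minimizer (x : 'cV[R]_nx) :
  (exists z, forall j, Zj G S w x j z) ->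
  exists z, is_minimizer H F G S w x [set: 'I_nc]%SET z.
Proof.
move=> [z0 z0_feas].
pose f (u : 'rV[R]_nz) := 2^-1 * (u *m H *m u^T) 0 0 + (x^T *m F *m u^T) 0 0.
have f_cost z : f z^T = cost H F x z by rewrite /f /cost trmxK.
have H_pd_row (u : 'rV[R]_nz) : u != 0 -> 0 < (u *m H *m u^T) 0 0.
  move=> u_neq0; have := H_pd u^T; rewrite trmxK; apply.
  by rewrite -trmx0 (inj_eq trmx_inj).
have [M M_bound] :=
  quad_linear_sublevel_bounded H (x^T *m F) (f z0^T) H_pd_row.
pose A := [set u : 'rV[R]_nz | forall j, Zj G S w x j u^T].
have A_closed : closed A.
  have -> : A = \bigcap_(j in [set: 'I_nc]) [set u | Zj G S w x j u^T].
    by apply/seteqP; split=> u /= Au j *; apply: Au.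
  apply: closed_bigI => j _.
  have := proj1 (continuous_closedP _) (mulmx_tr_continuous G j)
    [set r | r <= (S *m x) j 0 + w j 0].
  by apply; exact: closed_le.
have f_cont : continuous f.
  have half_quad_cont :
      continuous (fun u : 'rV[R]_nz => 2^-1 * (u *m H *m u^T) 0 0).
    move=> u; apply: (@continuousM R _ (fun=> 2^-1 : R)
      (fun u : 'rV[R]_nz => (u *m H *m u^T) 0 0) u).
      exact: cst_continuous.
    exact: quad_form_continuous.
  move=> u; exact: (continuousD (half_quad_cont u)
    (mulmx_tr_continuous (x^T *m F) 0 u)).
have z0_in_A : A z0^T by move=> j; rewrite trmxK.
have [c c_feas c_min] :=
  continuous_min_of_bounded_sublevel A_closed f_cont z0_in_A M_bound.
exists c^T; split=> [j _|z' z'_feas]; first exact: c_feas.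
by rewrite -!f_cost trmxK; apply: c_min => j /=; rewrite trmxK; apply: z'_feas.
Qed.

Lemma zstar_feasible (x : 'cV[R]_nx) :
  (exists z, forall j, Zj G S w x j z) ->
  forall j, Zj G S w x j (zstar H F G S w x).
Proof.
by move=> /exists_minimizer /(xgetPex 0) [zstar_feas _] j; apply: zstar_feas.
Qed.

End QuadraticProgram.

Section ConstraintBalls.
Context {R : realType} {nx nz nc : nat}.
Variables (G : 'M[R]_(nc, nz)) (S : 'M[R]_(nc, nx)) (w : 'cV[R]_nc).

Lemma Vj_col_mx j (x : 'cV[R]_nx) (z : 'cV[R]_nz) :
  Vj G S w j (col_mx x z) <-> Zj G S w x j z.
Proof. by rewrite /Vj /Zj /Hbar /= mul_row_col mulNmx !mxE; split; lra. Qed.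

Lemma card_le_of_sigma {i : nat} {v : 'cV[R]_(nx + nz)} {J : {set 'I_nc}}
    {r : R} :
  Vset G S w v -> (r%:E <= sigma G S w i)%E ->
  (forall j, j \in J -> exists2 q, enorm (q - v) < r & ~ Vj G S w j q) ->
  (#|J| <= i)%N.
Proof.
move=> v_in_V r_le_sigma outside.
have [->|[j0 j0J]] := set_0Vmem J; first by rewrite cards0.
have /choice [q q_out] : forall j, exists q,
    j \in J -> enorm (q - v) < r /\ ~ Vj G S w j q.
  move=> j; have [jJ|_] := boolP (j \in J); last by exists v.
  by have [q ? ?] := outside j jJ; exists q.
pose rho := \big[Num.max/0]_(j in J) enorm (q j - v).
have rho_lt_r : rho < r.
  have r_gt0 : 0 < r := le_lt_trans (enorm_ge0 _) (proj1 (q_out j0 j0J)).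
  by apply/bigmax_ltP; split=> // j /q_out [].
have /ereal_sup_gt [_ [r' [_ r'_balls] <-]] : (rho%:E < sigma G S w i)%E.
  by apply: lt_le_trans r_le_sigma; rewrite lte_fin.
rewrite lte_fin => rho_lt_r'.
have := r'_balls v v_in_V.
set balls := [set j : 'I_nc | `[< eball v r' `<=` Vj G S w j >]].
have balls_sub : balls \subset ~: J.
  apply/fintype.subsetP => j; rewrite !inE => /asboolP ball_in_Vj.
  apply/negP => jJ; have [_] := q_out j jJ; apply; apply: ball_in_Vj.
  rewrite /eball /=; apply: le_trans (ltW rho_lt_r').
  exact: (le_bigmax_cond _ (fun j => enorm (q j - v)) jJ).
have : (#|balls| <= #|~: J|)%N by exact: subset_leq_card.
have := cardsC J; rewrite card_ord; lia.
Qed.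

End ConstraintBalls.

Theorem theorem3 (R : realType) (nx nz nc : nat)
  (H : 'M[R]_nz) (F : 'M[R]_(nx, nz)) (G : 'M[R]_(nc, nz))
  (S : 'M[R]_(nc, nx)) (w : 'cV[R]_nc)
  (H_sym : H^T = H)
  (H_pd : forall z : 'cV[R]_nz, z != 0 -> 0 < (z^T *m H *m z) 0 0)
  (feasible : forall x : 'cV[R]_nx, exists z : 'cV[R]_nz,
      forall j, Zj G S w x j z)
  (LICQ : forall (x : 'cV[R]_nx) (c : 'I_nc -> R),
      \sum_(j in active H F G S w x) c j *: row j G = 0 ->
      forall j, j \in active H F G S w x -> c j = 0)
  (kappa : R)
  (kappa_lip : forall (x1 x2 : 'cV[R]_nx) (I : {set 'I_nc}),
      enorm (zstarI H F G S w x1 I - zstarI H F G S w x2 I)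
        <= kappa * enorm (x1 - x2))
  (x xhat : 'cV[R]_nx) (i : nat) (hi1 : (1 <= i)%N) (hinc : (i <= nc)%N)
  (hsig : ((enorm (x - xhat))%:E <=
           sigma G S w i * ((Num.sqrt (1 + kappa ^+ 2))^-1)%:E)%E) :
  (#|Iset H F G S w kappa xhat x| <= nz + i)%N.
Proof.
set zh := zstar H F G S w xhat.
have vh_in_V : Vset G S w (col_mx xhat zh).
  move=> j; apply/Vj_col_mx.
  exact: zstar_feasible H F G S w H_pd xhat (feasible xhat) j.
rewrite /Iset cardsU; apply: leq_trans (leq_subr _ _) _; apply: leq_add.
  exact: card_le_of_free_rows (LICQ xhat).
have r_le_sigma :
    ((enorm (x - xhat) * Num.sqrt (1 + kappa ^+ 2))%:E <= sigma G S w i)%E.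
  by rewrite EFinM -lee_pdivlMr // sqrtr_gt0 ltr_wpDr ?sqr_ge0.
apply: (card_le_of_sigma G S w vh_in_V r_le_sigma) => j.
rewrite inE => /andP[_ /asboolP /existsNP [z /not_implyP [z_near z_out]]].
have [|q q_close q_out] :=
  exists_closer_point_outside_halfspace (p := col_mx x z) (vh_in_V j).
  by rewrite ltNge; apply/negP => /Vj_col_mx.
exists q; first exact: lt_le_trans q_close (enorm_col_mx_sub_le z_near).
by rewrite /Vj /= leNgt q_out.
Qed.
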